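(* Let $G$ be a group definable in a model $M$ of an NIP theory, and let $\mu$ be a translation-invariant Keisler measure on the definable subsets of $G$. Then for every $g\in G$, the translation $U\mapsto g\cdot U$ has entropy zero with respect to $\mu$.
   Context: A Keisler measure on the definable subsets of $G$ (with parameters from $M$) is a finitely additive probability measure on them; invariance means $\mu(gU)=\mu(U)$ for all $g\in G$ and definable $U\subseteq G$. Entropy is the measure-theoretic (Kolmogorov–Sinai) entropy: for a finite partition $P$, $h(\tau,P)=\lim_n\frac1n H(\bigvee_{i=0}^{n-1}\tau^{-i}P)$ with $H(Q)=-\sum_{C\in Q}\mu(C)\log\mu(C)$, and the entropy of $\tau$ is the supremum over partitions. *)

From HB Require Import structures.
From mathcomp Require Import all_boot all_order all_algebra.
From mathcomp Require Import all_classical all_reals all_analysis.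
Set Implicit Arguments. Unset Strict Implicit. Unset Printing Implicit Defensive.
Import Order.TTheory GRing.Theory Num.Theory.
Local Open Scope classical_set_scope.
Local Open Scope ring_scope.

(* A first-order structure M is represented by the system of its          *)
(* definable-with-parameters subsets of the powers M^n = ('I_n -> M).     *)
(* Any family closed under the operations below is exactly the system of  *)
(* parameter-definable sets of the structure (M, (R_A)_A) with one         *)
(* relation symbol per member, and conversely.                            *)

Definition tconcat (M : Type) (m n : nat) (x : 'I_m -> M) (y : 'I_n -> M)
  : 'I_(m + n) -> M :=
  fun i => match fintype.split i with inl j => x j | inr j => y j end.

Record def_system (M : Type) (D : forall n : nat, set (set ('I_n -> M))) : Prop :=
  DefSystem {
    ds_nonempty : inhabited M;
    ds_top : forall n, D n setT;
    ds_compl : forall n (A : set ('I_n -> M)), D n A -> D n (~` A);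
    ds_inter : forall n (A B : set ('I_n -> M)), D n A -> D n B -> D n (A `&` B);
    ds_eq : forall n (i j : 'I_n), D n [set x | x i = x j];
    ds_const : forall n (i : 'I_n) (a : M), D n [set x | x i = a];
    ds_reindex : forall m n (f : 'I_n -> 'I_m) (A : set ('I_n -> M)),
        D n A -> D m [set z | A (fun i => z (f i))];
    ds_proj : forall m n (A : set ('I_(m + n) -> M)),
        D (m + n) A -> D m [set x | exists y : 'I_n -> M, A (tconcat x y)]
  }.

(* NIP: no definable relation D(x;y) has the independence property, i.e.  *)
(* for each such D there is N such that no N tuples a_0..a_{N-1} are      *)
(* shattered by the fibres D(-, b).  (Since IP of a formula is witnessed   *)
(* by finite configurations, this holds in M iff Th(M) is NIP.)           *)
Definition NIP (M : Type) (D : forall n : nat, set (set ('I_n -> M))) : Prop :=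
  forall m n (Phi : set ('I_(m + n) -> M)), D (m + n) Phi ->
    exists N : nat, forall a : 'I_N -> ('I_m -> M),
      ~ (forall J : set 'I_N, exists b : 'I_n -> M,
           forall i : 'I_N, Phi (tconcat (a i) b) <-> J i).

Definition definable_group (M : Type) (D : forall n : nat, set (set ('I_n -> M)))
  (k : nat) (G : set ('I_k -> M)) (mul : ('I_k -> M) -> ('I_k -> M) -> ('I_k -> M))
  : Prop :=
  [/\ D k G,
      (exists Gr : set ('I_(k + k + k) -> M), D (k + k + k) Gr /\
         forall x y w, Gr (tconcat (tconcat x y) w) <-> (G x /\ G y /\ w = mul x y)),
      (forall x y, G x -> G y -> G (mul x y)),
      (forall x y z, G x -> G y -> G z -> mul (mul x y) z = mul x (mul y z)) &
      (exists2 e, G e & forall x, G x ->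
         [/\ mul e x = x, mul x e = x & exists2 y, G y & mul y x = e /\ mul x y = e])].

Definition ltrans (M : Type) (k : nat) (mul : ('I_k -> M) -> ('I_k -> M) -> ('I_k -> M))
  (g : 'I_k -> M) (U : set ('I_k -> M)) : set ('I_k -> M) :=
  [set mul g u | u in U].

Definition keisler_measure (R : realType) (M : Type)
  (D : forall n : nat, set (set ('I_n -> M))) (k : nat) (G : set ('I_k -> M))
  (mu : set ('I_k -> M) -> R) : Prop :=
  [/\ (forall U, D k U -> U `<=` G -> 0 <= mu U),
      mu G = 1 &
      (forall U V, D k U -> D k V -> U `<=` G -> V `<=` G -> U `&` V = set0 ->
         mu (U `|` V) = mu U + mu V)].

Definition invariant_measure (R : realType) (M : Type)
  (D : forall n : nat, set (set ('I_n -> M))) (k : nat) (G : set ('I_k -> M))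
  (mul : ('I_k -> M) -> ('I_k -> M) -> ('I_k -> M)) (mu : set ('I_k -> M) -> R) : Prop :=
  forall g U, G g -> D k U -> U `<=` G -> mu (ltrans mul g U) = mu U.

Definition definable_partition (M : Type) (D : forall n : nat, set (set ('I_n -> M)))
  (k : nat) (G : set ('I_k -> M)) (p : nat) (P : 'I_p -> set ('I_k -> M)) : Prop :=
  [/\ (forall j, D k (P j)), (forall j, P j `<=` G),
      (forall j j', j != j' -> P j `&` P j' = set0) &
      (forall x, G x -> exists j, P j x)].

(* tau^{-1}(U) for tau : U |-> g.U, i.e. g^{-1}.U = {x in G | g x in U} *)
Definition tau_inv (M : Type) (k : nat) (G : set ('I_k -> M))
  (mul : ('I_k -> M) -> ('I_k -> M) -> ('I_k -> M)) (g : 'I_k -> M)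
  (U : set ('I_k -> M)) : set ('I_k -> M) :=
  [set x | G x /\ U (mul g x)].

Definition xlogx (R : realType) (x : R) : R := if x == 0 then 0 else x * ln x.

(* H( \/_{i<n} tau^{-i} P ): cells of the join are indexed by s : 'I_n -> 'I_p *)
Definition join_entropy (R : realType) (M : Type) (k : nat) (G : set ('I_k -> M))
  (mul : ('I_k -> M) -> ('I_k -> M) -> ('I_k -> M)) (mu : set ('I_k -> M) -> R)
  (g : 'I_k -> M) (p : nat) (P : 'I_p -> set ('I_k -> M)) (n : nat) : R :=
  - \sum_(s : {ffun 'I_n -> 'I_p})
      xlogx (mu [set x | G x /\ forall i : 'I_n, iter i (tau_inv G mul g) (P (s i)) x]).

From mathcomp Require Import all_boot all_order all_algebra.
From mathcomp Require Import all_classical all_reals all_analysis.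
From mathcomp Require Import ring lra.
Import Order.TTheory GRing.Theory Num.Theory.
Import numFieldNormedType.Exports.

(* The cells of the join of the translates [tau^-i P], i < n, are cut out by the truth values of the
   definable relations [x |-> P j (g^i x)], i.e. by the traces of the formulas [P j (y x)] on the
   parameters [y = g^0, ..., g^(n-1)].  By NIP and the Sauer-Shelah lemma there are at most
   polynomially many such traces, so the join has at most [(n+1)^(N p)] nonempty cells.  A partition
   with at most [L] nonempty cells has entropy at most [1 + ln L], hence the entropy of the join is
   [O(log n)] and its average over [n] tends to [0]. *)

Lemma card_tuple_cons {n} (A : {set n.+1.-tuple bool}) :
  #|A| = #|[set t : n.-tuple bool | [tuple of false :: t] \in A]| +
         #|[set t : n.-tuple bool | [tuple of true :: t] \in A]|.
Proof.
set A0 := [set t | _ \in A]; set A1 := [set t | _ \in A].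
have cons_inj b : injective (fun t : n.-tuple bool => [tuple of b :: t]).
  by move=> t t' /(congr1 val) [] /val_inj.
have -> : A = [set [tuple of false :: t] | t : n.-tuple bool in A0] :|:
              [set [tuple of true :: t] | t : n.-tuple bool in A1].
  apply/setP => t; rewrite inE; apply/idP/idP.
    move=> ht; rewrite (tuple_eta t) in ht *; case: (thead t) ht => ht.
      by apply/orP; right; apply/imsetP; exists [tuple of behead t]; rewrite // inE.
    by apply/orP; left; apply/imsetP; exists [tuple of behead t]; rewrite // inE.
  by case/orP => /imsetP [u]; rewrite inE => hu ->.
rewrite cardsU !card_imset // (_ : _ :&: _ = finset.set0) ?cards0 ?subn0 //.
apply/setP => t; rewrite !inE; apply/negP => /andP [/imsetP [u _ ->] /imsetP [u' _]].
by move/(congr1 val).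
Qed.

Definition shatters {n} (F : {set n.-tuple bool}) (m : n.-tuple bool) : bool :=
  [forall v : n.-tuple bool,
     [exists f in F, [forall i, tnth m i ==> (tnth f i == tnth v i)]]].

Lemma shatters_cons n (F : {set n.+1.-tuple bool}) (m : n.-tuple bool) (c : bool) :
  (forall v : n.+1.-tuple bool, exists b, (c ==> (b == thead v)) &&
       shatters [set t : n.-tuple bool | [tuple of b :: t] \in F] m) ->
  shatters F [tuple of c :: m].
Proof.
move=> h; apply/forallP => v; case: {h}(h v) => b /andP [hbc].
move=> /forallP /(_ [tuple of behead v]) /existsP [f' /andP [hf' /forallP hag]].
apply/existsP; exists [tuple of b :: f']; apply/andP; split; first by move: hf'; rewrite inE.
apply/forallP => i; case: (unliftP ord0 i) => [j ->|->].
  by rewrite !tnthS [in X in _ ==> (_ == X)](tuple_eta v) tnthS; exact: hag.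
by rewrite !tnth0; case: c hbc => //= /eqP ->.
Qed.

Lemma card_le_shattered {n} (F : {set n.-tuple bool}) :
  #|F| <= #|[set m | shatters F m]|.
Proof.
elim: n F => [|n IH] F.
  case: (set_0Vmem F) => [->|[f hf]]; first by rewrite cards0.
  rewrite (_ : [set m | _] = [set: 0.-tuple bool]) ?cardsT ?max_card //.
  apply/setP => m; rewrite !inE; apply/forallP => v; apply/existsP; exists f.
  by rewrite hf; apply/forallP => -[].
rewrite (card_tuple_cons F) (card_tuple_cons [set m | shatters F m]).
set F0 := [set t | _ \in F]; set F1 := [set t | _ \in F].
apply: (leq_trans (leq_add (IH F0) (IH F1))).
rewrite -cardsUI; apply: leq_add; apply: subset_leq_card; apply/fintype.subsetP => m; rewrite !inE.
  by case/orP => hm; apply: shatters_cons => v; [exists false | exists true]; rewrite hm.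
case/andP => hm0 hm1; apply: shatters_cons => v.
by exists (thead v); rewrite eqxx /=; case: (thead v).
Qed.

Lemma card_count_lt n N : #|[set m : n.-tuple bool | count id m < N]| <= n.+1 ^ N.
Proof.
elim: n N => [|n IH] [|N].
- by rewrite (leq_trans (max_card _)) // card_tuple.
- by rewrite (leq_trans (max_card _)) // card_tuple exp1n.
- have no_cell b : [set t : n.-tuple bool | [tuple of b :: t] \in
      [set m : n.+1.-tuple bool | count id m < 0]] = finset.set0.
    by apply/setP => t; rewrite !inE ltn0.
  by rewrite card_tuple_cons !no_cell cards0.
rewrite card_tuple_cons.
rewrite (_ : [set t | _ \in _] = [set m : n.-tuple bool | count id m < N.+1]); last first.
  by apply/setP => t; rewrite !inE.
rewrite (_ : [set t | _ \in _] = [set m : n.-tuple bool | count id m < N]); last first.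
  by apply/setP => t; rewrite !inE /= add1n ltnS.
apply: (leq_trans (leq_add (IH N.+1) (IH N))).
rewrite [n.+2 ^ N.+1]expnS expnS addnC -mulSn leq_mul //.
by case: N => // N; rewrite leq_exp2r.
Qed.

Definition vc_lt {M : Type} {m n : nat} (Phi : set ('I_(m + n) -> M)) (N : nat) : Prop :=
  forall a : 'I_N -> ('I_m -> M),
    ~ (forall J : set 'I_N, exists b : 'I_n -> M,
         forall i : 'I_N, Phi (tconcat (a i) b) <-> J i).

Lemma vc_lt_le {M : Type} {m n : nat} (Phi : set ('I_(m + n) -> M)) N N' :
  N <= N' -> vc_lt Phi N -> vc_lt Phi N'.
Proof.
move=> hNN' hN a' hshat; apply: (hN (fun t => a' (widen_ord hNN' t))) => J.
have [b hb] := hshat (fun i => exists2 t, widen_ord hNN' t = i & J t).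
exists b => t; rewrite hb; split => [[t' ht't]|]; last by exists t.
by rewrite (_ : t = t') //; apply/val_inj; move/(congr1 val): ht't.
Qed.

Lemma NIP_uniform {M : Type} {D : forall n : nat, set (set ('I_n -> M))} {m n : nat}
    {I : finType} {Phi : I -> set ('I_(m + n) -> M)} :
  NIP D -> (forall i, D (m + n) (Phi i)) -> exists N, forall i, vc_lt (Phi i) N.
Proof.
move=> hNIP hPhi; have [Nf hNf] := choice (fun i => hNIP m n (Phi i) (hPhi i)).
exists (\max_i Nf i) => i; exact: vc_lt_le (leq_bigmax i) (hNf i).
Qed.

Definition trace {M : Type} {m n k : nat} (Phi : set ('I_(m + n) -> M))
    (a : 'I_k -> ('I_m -> M)) (b : 'I_n -> M) : k.-tuple bool :=
  [tuple `[< Phi (tconcat (a i) b) >] | i < k].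

Lemma count_id_card n (m : n.-tuple bool) : count id m = #|[set i | tnth m i]|.
Proof.
rewrite (eq_card (B := tnth m)) => [|i]; last by rewrite inE.
by rewrite cardE /enum_mem size_filter -{1}(map_tnth_enum m) count_map enumT.
Qed.

(* By Pajor's lemma, more than [(k+1)^N] traces would shatter a set of at least [N] of the [k] points. *)
Lemma card_traces_le {M : Type} {m n : nat} (Phi : set ('I_(m + n) -> M)) k
    (a : 'I_k -> ('I_m -> M)) N :
  vc_lt Phi N -> #|[set v | `[< exists b, v = trace Phi a b >]]| <= k.+1 ^ N.
Proof.
move=> hN; apply: leq_trans (card_le_shattered _) (leq_trans _ (card_count_lt k N)).
apply: subset_leq_card; apply/fintype.subsetP => S; rewrite !inE => hS.
rewrite ltnNge; apply/negP; rewrite count_id_card => hNS.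
pose e (t : 'I_N) : 'I_k := enum_val (widen_ord hNS t).
have e_inj : injective e by move=> t t' /enum_val_inj /(congr1 val) /= /val_inj.
have eS t : tnth S (e t) by have := enum_valP (widen_ord hNS t); rewrite inE.
apply: (hN (fun t => a (e t))) => J.
pose v : k.-tuple bool := [tuple `[< exists t, e t = i /\ J t >] | i < k].
move/forallP: hS => /(_ v) /existsP [f /andP [hf /forallP hag]].
move: hf; rewrite inE => /asboolP [b hfb]; rewrite {}hfb in hag.
exists b => t; have := hag (e t); rewrite eS /= !tnth_mktuple => /eqP heq.
split => [/asboolP|hJ]; first by rewrite heq => /asboolP [t' [/e_inj ->]].
by apply/asboolP; rewrite heq; apply/asboolP; exists t.
Qed.

Lemma card_cells_le (X : Type) (S J C : finType) (cell : S -> X -> Prop)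
    (code : J -> X -> C) B :
  (forall j, #|[set c | `[< exists x, c = code j x >]]| <= B) ->
  (forall s s' x x', cell s x -> cell s' x' -> (forall j, code j x = code j x') -> s = s') ->
  #|[set s | `[< exists x, cell s x >]]| <= B ^ #|J|.
Proof.
move=> hB hcode; set Cells := [set s | _].
case: (set_0Vmem Cells) => [->|[s0]]; first by rewrite cards0.
rewrite inE => /asboolP [x0 _].
pose wit s := if pselect (exists x, cell s x) is left hx then projT1 (cid hx) else x0.
have witP s : s \in Cells -> cell s (wit s).
  by rewrite inE /wit => /asboolP hx; case: pselect => // hx'; case: cid.
pose codes s : {ffun J -> C} := [ffun j => code j (wit s)].
rewrite -(card_in_imset (f := codes)); last first.
  move=> s s' /witP hs /witP hs' /ffunP hss'.
  by apply: hcode hs hs' _ => j; have := hss' j; rewrite !ffunE.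
pose F j := [set c | `[< exists x, c = code j x >]].
apply: (@leq_trans #|family F|).
  apply: subset_leq_card; apply/fintype.subsetP => f /imsetP [s _ ->].
  by apply/familyP => j; rewrite ffunE inE; apply/asboolP; exists (wit s).
have prod_le (r : seq J) : foldr muln 1 [seq #|F j| | j <- r] <= B ^ size r.
  by elim: r => //= j r IH; rewrite expnS (leq_mul (hB j) IH).
by rewrite card_family cardE; apply: prod_le.
Qed.

Local Open Scope ring_scope.

Section Entropy.
Context {R : realType}.

Lemma xlogx_le0 (q : R) : 0 <= q <= 1 -> xlogx q <= 0.
Proof.
case/andP => q0 q1; rewrite /xlogx; case: eqP => // _.
by rewrite mulr_ge0_le0 // ln_le0.
Qed.

(* Tangent-line bound [ln y <= y - 1] at [y = (q L)^-1]. *)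
Lemma oppr_xlogx_le {q L : R} :
  0 <= q -> 0 < L -> - xlogx q <= (q != 0)%:R / L + q * ln L.
Proof.
move=> q0 L0; rewrite /xlogx; case: eqP => [->|/eqP qn0].
  by rewrite mul0r oppr0 mul0r addr0.
have qp : 0 < q by rewrite lt_neqAle eq_sym qn0.
have qL : 0 < q * L by rewrite mulr_gt0.
have := @le_ln1Dx R ((q * L)^-1 - 1); rewrite addrCA subrr addr0.
rewrite ltrBrDr addrC subrr invr_gt0 => /(_ qL).
rewrite lnV ?posrE // lnM ?posrE // => /(ler_wpM2l (ltW qp)).
rewrite mulrBr mulr1 invfM mulrA mulfV ?mul1r ?gt_eqF // mulrN mulrDr.
lra.
Qed.

Lemma entropy_ge0 (T : finType) (q : T -> R) :
  (forall s, 0 <= q s <= 1) -> 0 <= - \sum_s xlogx (q s).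
Proof.
by move=> q01; rewrite -sumrN sumr_ge0 // => s _; rewrite oppr_ge0 xlogx_le0.
Qed.

Lemma entropy_le_ln_card (T : finType) (q : T -> R) (L : R) :
  (forall s, 0 <= q s) -> \sum_s q s <= 1 -> 1 <= L ->
  #|[set s | q s != 0]|%:R <= L -> - \sum_s xlogx (q s) <= 1 + ln L.
Proof.
move=> q0 q1 L1 hsupp; have L0 : 0 < L := lt_le_trans ltr01 L1.
rewrite -sumrN (le_trans (ler_sum _ (fun s _ => oppr_xlogx_le (q0 s) L0))) //.
rewrite big_split /= -!mulr_suml -natr_sum.
have -> : (\sum_s (q s != 0%R) = #|[set s | q s != 0%R]|)%N.
  by rewrite -sum1dep_card [RHS]big_mkcond; apply: eq_bigr => s _; case: (q s != 0%R).
have : ln L * \sum_s q s <= ln L by rewrite ler_piMr // ln_ge0.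
have : #|[set s | q s != 0]|%:R / L <= 1 by rewrite ler_pdivrMr // mul1r.
lra.
Qed.

End Entropy.

Local Open Scope classical_set_scope.

Section LogGrowth.
Context {R : realType}.

Lemma ln_le_div_add_ln {y m : R} : 0 < y -> 0 < m -> ln y <= y / m + ln m.
Proof.
move=> y0 m0; have := @le_ln1Dx R (y / m - 1); rewrite addrCA subrr addr0.
rewrite ln_div ?posrE // ltrBrDr addrC subrr divr_gt0 // => /(_ isT).
lra.
Qed.

Lemma cvg_mulVn_log_bounded (C : R) (h : nat -> R) :
  (forall n, 0 <= h n) -> (forall n, h n <= 1 + C * ln n.+1%:R) ->
  (fun n => n%:R^-1 * h n) @ \oo --> 0.
Proof.
move=> h0 hC; apply/cvgrPdist_le => e e0.
(* With [m := 4 c / e], the bound [ln y <= y / m + ln m] trades the logarithm for slope [e / 4]. *)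
set c := `|C| + 1; have c0 : 0 < c by rewrite ltr_pwDr.
set m := 4 * c / e; have m0 : 0 < m by rewrite !divr_gt0 ?mulr_gt0.
set K := 1 + c * ln m.
have hK n : h n <= K + e / 4 * n.+1%:R.
  have ln0 : 0 <= ln (n.+1%:R : R) by rewrite ln_ge0 // ler1n.
  have hC' : C * ln n.+1%:R <= c * ln n.+1%:R.
    by rewrite ler_wpM2r // (le_trans (ler_norm _)) ?lerDl.
  have e4 : c * (n.+1%:R / m) = e / 4 * n.+1%:R.
    by rewrite /m; field; rewrite !gt_eqF.
  have := ler_wpM2l (ltW c0) (ln_le_div_add_ln (ltr0Sn R n) m0).
  rewrite mulrDr e4; move: (hC n); rewrite /K; lra.
near=> n.
have n1 : 1 <= n%:R :> R by near: n; exact: nbhs_infty_ger.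
have nK : 2 * `|K| / e <= n%:R by near: n; exact: nbhs_infty_ger.
rewrite sub0r normrN ger0_norm ?mulr_ge0 ?invr_ge0 //.
rewrite mulrC ler_pdivrMr ?(lt_le_trans ltr01 n1) //.
move: nK; rewrite ler_pdivrMr // => nK.
have := hK n; have := ler_norm K; rewrite -[n.+1%:R]natr1.
have : e <= e * n%:R by rewrite ler_peMr // ltW.
lra.
Unshelve. all: by end_near.
Qed.

End LogGrowth.

Lemma tconcatL (M : Type) m n (x : 'I_m -> M) (y : 'I_n -> M) i :
  tconcat x y (lshift n i) = x i.
Proof. by rewrite /tconcat (unsplitK (inl i : 'I_m + 'I_n)). Qed.

Lemma tconcatR (M : Type) m n (x : 'I_m -> M) (y : 'I_n -> M) i :
  tconcat x y (rshift m i) = y i.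
Proof. by rewrite /tconcat (unsplitK (inr i : 'I_m + 'I_n)). Qed.

Section DefinableSets.
Context {M : Type} {D : forall n : nat, set (set ('I_n -> M))} (hD : def_system D).

Lemma def_set0 n : D n set0.
Proof. rewrite -setCT; exact: (ds_compl hD (ds_top hD n)). Qed.

Lemma def_setU {n} {A B : set ('I_n -> M)} : D n A -> D n B -> D n (A `|` B).
Proof.
move=> hA hB; rewrite -[_ `|` _]setCK setCU.
exact: (ds_compl hD (ds_inter hD (ds_compl hD hA) (ds_compl hD hB))).
Qed.

Lemma def_bigcap {n} {I : finType} {F : I -> set ('I_n -> M)} :
  (forall i, D n (F i)) -> D n [set x | forall i, F i x].
Proof.
move=> hF; suff hr (r : seq I) : D n [set x | forall i, i \in r -> F i x].
  rewrite (_ : [set x | _] = [set x | forall i, i \in enum I -> F i x]) //.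
  by apply/seteqP; split => x h i //; apply: h; rewrite mem_enum.
elim: r => [|i r IH].
  by rewrite (_ : [set x | _] = setT); [exact: (ds_top hD) | apply/seteqP; split].
rewrite (_ : [set x | _] = F i `&` [set x | forall j, j \in r -> F j x]).
  exact: (ds_inter hD).
apply/seteqP; split => x.
  by move=> h; split => [|j hj]; apply: h; rewrite inE ?eqxx ?hj ?orbT.
by move=> [hi h] j; rewrite inE => /orP [/eqP ->|/h].
Qed.

(* Fixing the parameter [c] as a conjunction of constants, swapping the two blocks of variables
   and projecting the parameter away. *)
Lemma def_fibre {m n} {B : set ('I_(m + n) -> M)} (c : 'I_m -> M) :
  D (m + n) B -> D n [set x | B (tconcat c x)].
Proof.
move=> hB.
pose E := B `&` [set z | forall i, z (lshift n i) = c i].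
have hE : D (m + n) E by apply: (ds_inter hD hB); apply: def_bigcap => i; exact: (ds_const hD).
pose swap (i : 'I_(m + n)) : 'I_(n + m) :=
  match fintype.split i with inl j => rshift n j | inr j => lshift m j end.
have swapE (x : 'I_n -> M) (y : 'I_m -> M) : (fun i => tconcat x y (swap i)) = tconcat y x.
  apply/funext => i; rewrite /swap {2}/tconcat.
  by case: (fintype.split i) => j; rewrite ?tconcatL ?tconcatR.
rewrite (_ : [set x | _] = [set x | exists y, [set z | E (fun i => z (swap i))] (tconcat x y)]).
  exact/(ds_proj hD)/(ds_reindex hD).
apply/seteqP; split => x /=.
  by move=> hx; exists c; rewrite swapE; split => // i; rewrite tconcatL.
move=> [y]; rewrite swapE => -[hB' hy].
suff <- : y = c by [].
by apply/funext => i; rewrite -(hy i) tconcatL.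
Qed.

End DefinableSets.

Section KeislerMeasure.
Context {R : realType} {M : Type} {D : forall n : nat, set (set ('I_n -> M))}.
Context {k : nat} {G : set ('I_k -> M)} {mu : set ('I_k -> M) -> R}.
Context (hD : def_system D) (hG : D k G) (hmu : keisler_measure D G mu).

Lemma keisler_measure0 : mu set0 = 0.
Proof.
case: hmu => _ _ hadd.
have := hadd set0 set0 (def_set0 hD _) (def_set0 hD _) (sub0set _) (sub0set _) (setI0 _).
rewrite setU0; lra.
Qed.

Lemma keisler_measure_le1 U : D k U -> U `<=` G -> mu U <= 1.
Proof.
case: hmu => mu0 muG hadd hU hUG.
have hV : D k (G `&` ~` U) by exact: (ds_inter hD hG (ds_compl hD hU)).
have := hadd U (G `&` ~` U) hU hV hUG (@subIsetl _ _ _).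
rewrite setIA [U `&` G]setIC -setIA setICr setI0 setUIr setUCr setIT.
rewrite (setUidr hUG) muG => /(_ erefl).
by have := mu0 _ hV (@subIsetl _ _ _); lra.
Qed.

Lemma keisler_measure_sum_le1 {T : finType} {C : T -> set ('I_k -> M)} :
  (forall s, D k (C s)) -> (forall s, C s `<=` G) ->
  (forall s s', s != s' -> C s `&` C s' = set0) -> \sum_s mu (C s) <= 1.
Proof.
case: hmu => _ _ hadd hC hCG hdisj.
pose U (r : seq T) := [set x | exists2 s, s \in r & C s x].
have hU r : uniq r -> D k (U r) /\ mu (U r) = \sum_(s <- r) mu (C s).
  elim: r => [_|s r IH /= /andP [hs /IH [hUd hUm]]].
    rewrite big_nil (_ : U [::] = set0) ?keisler_measure0; last by apply/seteqP; split => x // [].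
    by split => //; exact: def_set0 hD _.
  have -> : U (s :: r) = C s `|` U r.
    apply/seteqP; split => [x [s0]|x [h|[s0 h1 h2]]].
      by rewrite inE => /orP [/eqP -> h|h1 h2]; [left|right; exists s0].
    by exists s; rewrite ?inE ?eqxx.
    by exists s0; rewrite // inE h1 orbT.
  split; first exact (def_setU hD (hC s) hUd).
  rewrite big_cons -hUm; apply: hadd => //; first by move=> x [s0 _ /hCG].
  apply/seteqP; split => x // [h1 [s0 h2 h3]].
  have hne : s != s0 by apply: contraNneq hs => ->.
  by rewrite -(hdisj _ _ hne); split.
have [hUd hUm] := hU _ (index_enum_uniq T).
by rewrite -hUm; apply: keisler_measure_le1 => // x [s _ /hCG].
Qed.

End KeislerMeasure.

Section TranslationJoin.
Context {R : realType} {M : Type} {D : forall n : nat, set (set ('I_n -> M))}.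
Context {k : nat} {G : set ('I_k -> M)} {mul : ('I_k -> M) -> ('I_k -> M) -> 'I_k -> M}.
Context {mu : set ('I_k -> M) -> R}.
Context (Gr : set ('I_(k + k + k) -> M)) (e g : 'I_k -> M) {p : nat} (P : 'I_p -> set ('I_k -> M)).
Context (hD : def_system D) (hGdef : D k G) (hGr : D (k + k + k) Gr)
  (hGrE : forall x y w, Gr (tconcat (tconcat x y) w) <-> G x /\ G y /\ w = mul x y)
  (hmulG : forall x y, G x -> G y -> G (mul x y))
  (hmulA : forall x y z, G x -> G y -> G z -> mul (mul x y) z = mul x (mul y z))
  (he : G e) (hmul1 : forall x, G x -> mul e x = x) (hg : G g)
  (hPdef : forall j, D k (P j)) (hPdisj : forall j j', j != j' -> P j `&` P j' = set0)
  (hmu : keisler_measure D G mu).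

Definition gpow (i : nat) : 'I_k -> M := iter i (mul g) e.

Lemma gpowG i : G (gpow i).
Proof. by rewrite /gpow; elim: i => //= i IH; exact: hmulG. Qed.

Lemma iter_mulE i x : G x -> iter i (mul g) x = mul (gpow i) x.
Proof.
elim: i => [hx|i IH hx] /=; first by rewrite (hmul1 x hx).
by rewrite IH // -hmulA //; exact: gpowG.
Qed.

Lemma iter_tau_invE i U x : G x -> iter i (tau_inv G mul g) U x <-> U (iter i (mul g) x).
Proof.
elim: i U x => [//|i IH] U x hx; rewrite [iter i.+1 (mul g) x]iterSr /=.
have hgx := IH U _ (hmulG _ _ hg hx).
by split => [[_ /hgx]|/hgx].
Qed.

Definition lmul_in (j : 'I_p) : set ('I_(k + k) -> M) :=
  [set z | exists w, Gr (tconcat z w) /\ P j w].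

Lemma def_lmul_in j : D (k + k) (lmul_in j).
Proof.
have := ds_proj hD (ds_inter hD hGr (ds_reindex hD (@rshift (k + k) k) (hPdef j))).
have rshiftK z w : (fun i => tconcat z w (rshift (k + k) i)) = w.
  by apply/funext => i; rewrite tconcatR.
by congr D; apply/seteqP; split => z [w [hw1 hw2]]; exists w; split; rewrite //= ?rshiftK in hw2 *.
Qed.

Lemma lmul_inE j y x : lmul_in j (tconcat y x) <-> [/\ G y, G x & P j (mul y x)].
Proof.
split => [[w [/hGrE [hy [hx ->]] hw]] //|[hy hx hw]].
by exists (mul y x); split => //; apply/hGrE.
Qed.

Definition cell n (s : {ffun 'I_n -> 'I_p}) : set ('I_k -> M) :=
  [set x | G x /\ forall i : 'I_n, iter i (tau_inv G mul g) (P (s i)) x].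

Lemma cellE n s x :
  cell n s x <-> G x /\ forall i : 'I_n, lmul_in (s i) (tconcat (gpow i) x).
Proof.
split => -[hx h]; split => // i; have := h i.
  move/(iter_tau_invE _ _ _ hx); rewrite iter_mulE // => hP.
  by apply/lmul_inE; split => //; exact: gpowG.
by case/lmul_inE => _ _ hP; apply/(iter_tau_invE _ _ _ hx); rewrite iter_mulE.
Qed.

Lemma def_cell n s : D k (cell n s).
Proof.
have := ds_inter hD hGdef (def_bigcap hD (fun i : 'I_n => def_fibre hD (gpow i) (def_lmul_in (s i)))).
by congr D; apply/seteqP; split => x /cellE.
Qed.

Lemma lmul_in_uniq {x j j' y} : lmul_in j (tconcat y x) -> lmul_in j' (tconcat y x) -> j = j'.
Proof.
case/lmul_inE => _ _ hj /lmul_inE [_ _ hj']; apply: contrapT => /eqP /hPdisj.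
by move/seteqP => [/(_ (mul y x)) + _]; apply.
Qed.

Lemma cell_disjoint n s s' : s != s' -> cell n s `&` cell n s' = set0.
Proof.
move=> hss'; apply/seteqP; split => x // [/cellE [_ h] /cellE [_ h']].
by case/eqP: hss'; apply/ffunP => i; exact: lmul_in_uniq (h i) (h' i).
Qed.

Lemma card_nonempty_cells n N : (forall j, vc_lt (lmul_in j) N) ->
  (#|[set s | `[< exists x, cell n s x >]]%SET| <= (n.+1 ^ N) ^ p)%N.
Proof.
move=> hN; rewrite -[p in (_ ^ p)%N]card_ord.
apply: (card_cells_le _ _ _ _ _ (fun j => trace (lmul_in j) (fun i : 'I_n => gpow i))).
  by move=> j; exact: card_traces_le.
move=> s s' x x' /cellE [_ hx] /cellE [_ hx'] hcode; apply/ffunP => i.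
have := congr1 (fun t => tnth t i) (hcode (s i)); rewrite /= !tnth_mktuple.
move/asboolP: (hx i) => -> /esym /asboolP hs; exact: lmul_in_uniq hs (hx' i).
Qed.

Lemma join_entropy_bound n N : (forall j, vc_lt (lmul_in j) N) ->
  0 <= join_entropy G mul mu g P n <= 1 + (N * p)%:R * ln n.+1%:R.
Proof.
move=> hN; rewrite /join_entropy.
have mu_ge0 s : 0 <= mu (cell n s).
  by case: hmu => mu0 _ _; apply: mu0 (def_cell n s) _ => x [].
have mu_le1 s : mu (cell n s) <= 1.
  by apply: keisler_measure_le1 hD hGdef hmu _ (def_cell n s) _ => x [].
apply/andP; split; first by apply: entropy_ge0 => s; rewrite mu_ge0 mu_le1.
rewrite mulr_natl -lnXn // -natrX expnM.
apply: entropy_le_ln_card => //.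
- by apply: (keisler_measure_sum_le1 hD hGdef hmu (def_cell n) _ (cell_disjoint n)) => s x [].
- by rewrite ler1n !expn_gt0.
rewrite ler_nat (leq_trans _ (card_nonempty_cells n N hN)) //.
apply: subset_leq_card; apply/fintype.subsetP => s; rewrite !inE.
move=> /eqP hs; apply: contrapT => hempty; apply: hs.
rewrite -[X in mu X]/(cell n s) (_ : cell n s = set0) ?(keisler_measure0 hD hmu) //.
by apply/seteqP; split => x // hx; apply: hempty; exists x.
Qed.

Lemma cvg_join_entropy_rate : NIP D ->
  (fun n => n%:R^-1 * join_entropy G mul mu g P n) @ \oo --> 0.
Proof.
move=> hNIP; have [N hN] := NIP_uniform hNIP def_lmul_in.
by apply: (cvg_mulVn_log_bounded (N * p)%:R) => n; case/andP: (join_entropy_bound n N hN).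
Qed.

End TranslationJoin.

Theorem mainTheorem3 (R : realType) (M : Type)
  (D : forall n : nat, set (set ('I_n -> M)))
  (k : nat) (G : set ('I_k -> M))
  (mul : ('I_k -> M) -> ('I_k -> M) -> ('I_k -> M))
  (mu : set ('I_k -> M) -> R) :
  def_system D -> NIP D -> definable_group D G mul ->
  keisler_measure D G mu -> invariant_measure D G mul mu ->
  forall g : 'I_k -> M, G g ->
  forall (p : nat) (P : 'I_p -> set ('I_k -> M)), definable_partition D G P ->
    (fun n : nat => (n%:R)^-1 * join_entropy G mul mu g P n) @ \oo --> (0 : R).
Proof.
move=> hD hNIP [hGdef [Gr [hGr hGrE]] hmulG hmulA [e he hid]] hmu _ g hg p P.
case=> hPdef _ hPdisj _.
have hmul1 x : G x -> mul e x = x by case/hid.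
exact: (cvg_join_entropy_rate Gr e g P hD).
Qed.
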